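(* Assume the CFL condition $0\le \lambda \sup_{w\ge 1} W'(w)\le 1$, and let $(y_{0,i})_{i\in\mathbb Z}$ be a bounded sequence with $y_{0,i}\ge1$ and $|y_{0}|_{BV}:=\sum_{i\in\mathbb Z}|y_{0,i+1}-y_{0,i}|<\infty$. Let $(w^n_i)$ be the solution of the scheme. Then for all $n\ge0$ and $i\in\mathbb Z$: $$1\le \inf_j y_{0,j}\le w^n_i\le \sup_j y_{0,j},\qquad \sum_{i}|w^n_{i+1}-w^n_i|\le \sum_i|y_{0,i+1}-y_{0,i}|,$$ $$\Delta z\sum_i|w^{n+1}_i-w^n_i|\le \Delta t\,\|W'\|_{\infty}\,|y_0|_{BV},$$ where $\|W'\|_\infty=\sup_{w\ge1}|W'(w)|$.
   Context: Kernel: $\Phi:[0,\infty)\to[0,\infty)$ is non-increasing with $\int_0^\infty\Phi(z)\,dz=1$ and $\int_0^\infty z\Phi(z)\,dz<\infty$; for $\alpha>0$, $\Phi_\alpha(z)=\alpha^{-1}\Phi(z/\alpha)$. Flux: $V\in C^1([0,\infty))$ is non-increasing and $W:[1,\infty)\to\mathbb R$, $W(w)=V(1/w)$. Discretization: $\Delta z>0$, $\Delta t>0$, $\lambda=\Delta t/\Delta z$, $z_j=(j-\tfrac12)\Delta z$ for $j\in\tfrac12\mathbb Z$, and for integers $j\ge i$, $\Phi_{ij\alpha}=\int_{z_{j-1/2}}^{z_{j+1/2}}\Phi_\alpha(\zeta-z_{i-1/2})\,d\zeta$. The scheme: $w^0_i=\sum_{j\ge i}\Phi_{ij\alpha}y_{0,j}$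 and $w^{n+1}_i=w^n_i+\lambda(\overline W^{\,n}_{i+1/2}-\overline W^{\,n}_{i-1/2})$ for $n\ge0$, where $\overline W^{\,n}_{i-1/2}=\sum_{j\ge i}\Phi_{ij\alpha}W(w^n_j)$. *)

From Stdlib Require Import Reals ZArith.
From Coquelicot Require Import Coquelicot.
Open Scope R_scope.

(* Grid points z_j = (j - 1/2) dz, for half-integer j given as a real. *)
Definition zpt (dz x : R) : R := (x - 1/2) * dz.

Definition Phi_a (Phi : R -> R) (alpha : R) (z : R) : R := / alpha * Phi (z / alpha).

Definition Phi_ij (Phi : R -> R) (alpha dz : R) (i j : Z) : R :=
  RInt (fun zeta => Phi_a Phi alpha (zeta - zpt dz (IZR i - 1/2)))
       (zpt dz (IZR j - 1/2)) (zpt dz (IZR j + 1/2)).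

Definition conv_from (Phi : R -> R) (alpha dz : R) (u : Z -> R) (i : Z) : R :=
  Series (fun k : nat => Phi_ij Phi alpha dz i (i + Z.of_nat k)%Z * u (i + Z.of_nat k)%Z).

Definition Wf (V : R -> R) (w : R) : R := V (/ w).

(* Sum over Z of a (nonnegative) family, as an extended real:
   the supremum of the symmetric partial sums sum_{i=-N}^{N} a i. *)
Definition zsum (a : Z -> R) : Rbar :=
  Lub_Rbar (fun s => exists N : nat,
    s = sum_n (fun k : nat => a (Z.of_nat k - Z.of_nat N)%Z) (2 * N)).

Definition BV (u : Z -> R) : Rbar := zsum (fun i => Rabs (u (i + 1)%Z - u i)).

Definition supWp (V : R -> R) : Rbar :=
  Lub_Rbar (fun y => exists w, 1 <= w /\ y = Derive (Wf V) w).
Definition normWp (V : R -> R) : Rbar :=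
  Lub_Rbar (fun y => exists w, 1 <= w /\ y = Rabs (Derive (Wf V) w)).

(* The weight Phi_{i,i+k,alpha} only depends on k: it is the mass p_k of Phi on
   the k-th cell of a grid of mesh dz/alpha, so p is a discrete kernel
   (nonnegative, non-increasing, total mass 1) and the scheme reads
   w^{n+1} = step w^n with step u = u + lam Δ(conv p (W o u)), lam = dt/dz.
   The CFL hypothesis makes sup W' a finite S with lam S <= 1, so W is
   non-decreasing and S-Lipschitz on [1, +oo).  Summation by parts writes
   Δ(step u)_i = Δu_i - lam p_0 ΔW_i + lam sum_k (p_k - p_{k+1}) ΔW_{i+1+k}; the
   diagonal part is monotone under the CFL condition and the other part has
   nonnegative coefficients.  This yields, for data with values in [m, M] and
   window total variations at most B: the maximum principle, the TV bound (the
   diagonal gain compensates the off-diagonal loss, up to an arbitrarily small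
   error on large windows) and the time estimate sum |step u - u| <= lam S B.
   Sums over Z are handled through finite windows and passed to zsum at the end.
   The file develops, in order: the cell masses of Phi, window sums, the
   discrete convolution, the flux, one step of the scheme, and the translation
   of the hypotheses of the theorem. *)

From Stdlib Require Import Reals ZArith Lia Lra Classical.
From Coquelicot Require Import Coquelicot.
Open Scope R_scope.

Section KernelIntegrals.

Variable Phi : R -> R.
Hypothesis HPhi_int : is_RInt_gen Phi (at_point 0) (Rbar_locally p_infty) 1.

Lemma Phi_tail (eps : posreal) :
  exists M, forall y, M < y -> exists v, is_RInt Phi 0 y v /\ Rabs (v - 1) < eps.
Proof.
  destruct (HPhi_int (ball 1 eps) (locally_ball 1 eps)) as [Q P HQ [M HM] Hp].
  exists M; intros y Hy.
  destruct (Hp 0 y HQ (HM y Hy)) as [v [Hv Hb]].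
  exists v; split; [exact Hv | exact Hb].
Qed.

Lemma Phi_ex_RInt a b : 0 <= a <= b -> ex_RInt Phi a b.
Proof.
  intros Hab.
  destruct (Phi_tail (mkposreal 1 Rlt_0_1)) as [M HM].
  destruct (HM (Rmax M b + 1)) as [v [Hv _]].
  { generalize (Rmax_l M b); lra. }
  generalize (Rmax_r M b); intros.
  apply (ex_RInt_Chasles_2 Phi 0 a b); [lra |].
  apply (ex_RInt_Chasles_1 Phi 0 b (Rmax M b + 1)); [lra | exists v; exact Hv].
Qed.

End KernelIntegrals.

(* The mass of Phi on the k-th cell [k c, (k+1) c] of a grid of mesh c > 0.
   These masses are the weights Phi_{i,i+k,alpha} of the scheme (c = dz/alpha). *)
Definition cell_mass (Phi : R -> R) (c : R) (k : nat) : R :=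
  RInt Phi (INR k * c) (INR (S k) * c).

Record discrete_kernel (p : nat -> R) : Prop := {
  kernel_nonneg : forall k, 0 <= p k;
  kernel_noninc : forall k, p (S k) <= p k;
  kernel_mass : is_series p 1 }.

Section CellMasses.

Variable Phi : R -> R.
Hypothesis HPhi_nonneg : forall z, 0 <= z -> 0 <= Phi z.
Hypothesis HPhi_noninc : forall z1 z2, 0 <= z1 -> z1 <= z2 -> Phi z2 <= Phi z1.
Hypothesis HPhi_int : is_RInt_gen Phi (at_point 0) (Rbar_locally p_infty) 1.
Variable c : R.
Hypothesis Hc : 0 < c.

Lemma cell_ex_RInt k m : (k <= m)%nat -> ex_RInt Phi (INR k * c) (INR m * c).
Proof.
  intros Hkm. apply Phi_ex_RInt; [exact HPhi_int |].
  generalize (pos_INR k) (le_INR _ _ Hkm); nra.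
Qed.

Lemma cell_mass_nonneg k : 0 <= cell_mass Phi c k.
Proof.
  unfold cell_mass. generalize (pos_INR k); intros. rewrite S_INR.
  apply RInt_ge_0; [nra | rewrite <- S_INR; apply cell_ex_RInt; lia |].
  intros x Hx. apply HPhi_nonneg. nra.
Qed.

(* Since Phi is non-increasing, translating a cell to the right decreases its mass. *)
Lemma cell_mass_noninc k : cell_mass Phi c (S k) <= cell_mass Phi c k.
Proof.
  unfold cell_mass. generalize (pos_INR k); intros.
  assert (E : RInt Phi (INR (S k) * c) (INR (S (S k)) * c)
            = RInt (fun y => scal 1 (Phi (1 * y + c))) (INR k * c) (INR (S k) * c)).
  { rewrite (RInt_comp_lin Phi 1 c); [f_equal; rewrite !S_INR; ring |].
    apply Phi_ex_RInt; [exact HPhi_int | rewrite !S_INR; nra]. }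
  rewrite E. apply RInt_le.
  - rewrite S_INR; lra.
  - apply (ex_RInt_comp_lin Phi 1 c). apply Phi_ex_RInt; [exact HPhi_int | rewrite !S_INR; nra].
  - apply cell_ex_RInt; lia.
  - intros x Hx. rewrite S_INR in Hx. cbn. rewrite !Rmult_1_l. apply HPhi_noninc; nra.
Qed.

Lemma cell_mass_partial_sum n : sum_n (cell_mass Phi c) n = RInt Phi 0 (INR (S n) * c).
Proof.
  induction n as [|n IHn].
  - rewrite sum_O. unfold cell_mass. simpl INR. rewrite Rmult_0_l. reflexivity.
  - rewrite sum_Sn, IHn. unfold cell_mass.
    replace 0 with (INR 0 * c) at 1 2 by (simpl; ring).
    apply (RInt_Chasles Phi); apply cell_ex_RInt; lia.
Qed.

Lemma cell_mass_series : is_series (cell_mass Phi c) 1.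
Proof.
  apply filterlim_locally. intros eps.
  destruct (Phi_tail Phi HPhi_int eps) as [M HM].
  destruct (nfloor_ex (Rmax 0 (M / c)) (Rmax_l _ _)) as [N HN].
  exists N. intros n Hn. rewrite cell_mass_partial_sum, S_INR.
  assert (INR N <= INR n) by (apply le_INR; lia).
  assert (M / c <= Rmax 0 (M / c)) by apply Rmax_r.
  assert (HMy : M < (INR n + 1) * c).
  { replace M with ((M / c) * c) by (field; lra). apply Rmult_lt_compat_r; lra. }
  destruct (HM _ HMy) as [v [Hv Hb]].
  rewrite (is_RInt_unique _ _ _ _ Hv). exact Hb.
Qed.

Lemma cell_mass_kernel : discrete_kernel (cell_mass Phi c).
Proof.
  constructor; [exact cell_mass_nonneg | exact cell_mass_noninc | exact cell_mass_series].
Qed.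

End CellMasses.

(* After the change of variables zeta = z_{i-1/2} + alpha y, the scheme weight
   Phi_{i,i+k,alpha} is the k-th cell mass of Phi on the grid of mesh dz/alpha. *)
Lemma Phi_ij_cell_mass Phi alpha dz i k :
  is_RInt_gen Phi (at_point 0) (Rbar_locally p_infty) 1 -> 0 < alpha -> 0 < dz ->
  Phi_ij Phi alpha dz i (i + Z.of_nat k)%Z = cell_mass Phi (dz / alpha) k.
Proof.
  intros HPhi_int Halpha Hdz.
  unfold Phi_ij, cell_mass, zpt, Phi_a.
  rewrite plus_IZR, <- INR_IZR_INZ.
  set (v := - ((IZR i - 1) * dz) / alpha).
  assert (E : forall zeta, / alpha * Phi ((zeta - (IZR i - 1 / 2 - 1 / 2) * dz) / alpha)
                         = scal (/ alpha) (Phi (/ alpha * zeta + v))).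
  { intros z. cbn. f_equal. f_equal. unfold v. field. lra. }
  rewrite (RInt_ext _ _ _ _ (fun x _ => E x)).
  generalize (pos_INR k); intros.
  assert (E1 : / alpha * ((IZR i + INR k - 1 / 2 - 1 / 2) * dz) + v = INR k * (dz / alpha))
    by (unfold v; field; lra).
  assert (E2 : / alpha * ((IZR i + INR k + 1 / 2 - 1 / 2) * dz) + v = INR (S k) * (dz / alpha))
    by (unfold v; rewrite S_INR; field; lra).
  rewrite (RInt_comp_lin Phi (/ alpha) v), E1, E2; [reflexivity |].
  rewrite E1, E2. apply cell_ex_RInt; [exact HPhi_int | apply Rdiv_lt_0_compat; lra | lia].
Qed.

(* Sums over Z (zsum, BV) are suprema of symmetric windows; all estimates of
   the scheme are first proved on arbitrary windows and then passed to zsum. *)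
Fixpoint wsum (a : Z -> R) (lo : Z) (n : nat) : R :=
  match n with O => 0 | S n => wsum a lo n + a (lo + Z.of_nat n)%Z end.

Lemma wsum_ext a b lo n : (forall i, a i = b i) -> wsum a lo n = wsum b lo n.
Proof. intros H; induction n; simpl; [reflexivity | rewrite IHn, H; reflexivity]. Qed.

Lemma wsum_le a b lo n : (forall i, a i <= b i) -> wsum a lo n <= wsum b lo n.
Proof. intros H; induction n; simpl; [lra | generalize (H (lo + Z.of_nat n)%Z); lra]. Qed.

Lemma wsum_nonneg a lo n : (forall i, 0 <= a i) -> 0 <= wsum a lo n.
Proof. intros H; induction n; simpl; [lra | generalize (H (lo + Z.of_nat n)%Z); lra]. Qed.

Lemma wsum_plus a b lo n : wsum (fun i => a i + b i) lo n = wsum a lo n + wsum b lo n.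
Proof. induction n; simpl; [ring | rewrite IHn; ring]. Qed.

Lemma wsum_minus a b lo n : wsum (fun i => a i - b i) lo n = wsum a lo n - wsum b lo n.
Proof. induction n; simpl; [ring | rewrite IHn; ring]. Qed.

Lemma wsum_scal c a lo n : wsum (fun i => c * a i) lo n = c * wsum a lo n.
Proof. induction n; simpl; [ring | rewrite IHn; ring]. Qed.

Lemma wsum_shift a d lo n : wsum (fun i => a (i + d)%Z) lo n = wsum a (lo + d) n.
Proof. induction n; simpl; [ring | rewrite IHn; do 2 f_equal; lia]. Qed.

Lemma wsum_split a lo n m : wsum a lo (n + m) = wsum a lo n + wsum a (lo + Z.of_nat n) m.
Proof.
  induction m; simpl; [rewrite Nat.add_0_r; ring |].
  rewrite Nat.add_succ_r. simpl. rewrite IHm.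
  replace (lo + Z.of_nat (n + m))%Z with (lo + Z.of_nat n + Z.of_nat m)%Z by lia. ring.
Qed.

Lemma wsum_window a lo n L K : (forall i, 0 <= a i) -> (L <= lo)%Z ->
  (lo + Z.of_nat n <= L + Z.of_nat K)%Z -> wsum a lo n <= wsum a L K.
Proof.
  intros H H1 H2.
  set (k1 := Z.to_nat (lo - L)).
  replace K with (k1 + (n + (K - (k1 + n))))%nat by lia.
  rewrite !wsum_split.
  replace (L + Z.of_nat k1)%Z with lo by (unfold k1; lia).
  generalize (wsum_nonneg a L k1 H) (wsum_nonneg a (lo + Z.of_nat n) (K - (k1 + n)) H). lra.
Qed.

Lemma wsum_Series (f : Z -> nat -> R) lo n : (forall i, ex_series (f i)) ->
  ex_series (fun k => wsum (fun i => f i k) lo n) /\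
  wsum (fun i => Series (f i)) lo n = Series (fun k => wsum (fun i => f i k) lo n).
Proof.
  intros Hf. induction n as [|n [IHex IHeq]]; simpl.
  - split.
    + apply (ex_series_ext (fun k => 0 * f lo k)); [intros; apply Rmult_0_l | exact (ex_series_scal_l 0 _ (Hf lo))].
    + transitivity (Series (fun k => 0 * f lo k)); [rewrite Series_scal_l; ring |].
      apply Series_ext; intros; ring.
  - split; [apply (ex_series_plus _ _ IHex (Hf _)) |].
    rewrite IHeq, Series_plus by auto. reflexivity.
Qed.

Lemma symmetric_partial_sum a N :
  sum_n (fun k => a (Z.of_nat k - Z.of_nat N)%Z) (2 * N) = wsum a (- Z.of_nat N) (S (2 * N)).
Proof.
  induction (2 * N)%nat as [|n IHn].
  - rewrite sum_O. simpl. rewrite Rplus_0_l. f_equal. lia.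
  - rewrite sum_Sn, IHn. change (plus ?x ?y) with (x + y). simpl (wsum a _ (S (S n))).
    do 2 f_equal. lia.
Qed.

Lemma zsum_le_of_windows a B : (forall lo n, wsum a lo n <= B) -> Rbar_le (zsum a) (Finite B).
Proof.
  intros HB. apply (Lub_Rbar_correct _). intros s [N ->].
  rewrite symmetric_partial_sum. apply HB.
Qed.

Lemma window_le_zsum a lo n : (forall i, 0 <= a i) -> Rbar_le (Finite (wsum a lo n)) (zsum a).
Proof.
  intros H0. set (N := (Z.to_nat (Z.abs lo) + n)%nat).
  apply Rbar_le_trans with (Finite (wsum a (- Z.of_nat N) (S (2 * N)))).
  - apply wsum_window; [exact H0 | unfold N; lia | unfold N; lia].
  - apply (Lub_Rbar_correct _). exists N. symmetry. apply symmetric_partial_sum.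
Qed.

Lemma window_le_finite_zsum a lo n : (forall i, 0 <= a i) -> is_finite (zsum a) ->
  wsum a lo n <= real (zsum a).
Proof. intros H0 Hf. generalize (window_le_zsum a lo n H0). rewrite <- Hf. auto. Qed.

Lemma zsum_finite_of_windows a B : (forall i, 0 <= a i) -> (forall lo n, wsum a lo n <= B) ->
  exists z, zsum a = Finite z /\ 0 <= z <= B.
Proof.
  intros H0 HB. generalize (zsum_le_of_windows a B HB) (window_le_zsum a 0 0 H0).
  destruct (zsum a) as [z| |]; simpl; intros H1 H2; try contradiction.
  exists z. simpl in H2. split; [reflexivity | lra].
Qed.

Lemma window_sup a B : (forall i, 0 <= a i) -> (forall lo n, wsum a lo n <= B) ->
  exists A, (forall lo n, wsum a lo n <= A) /\
    (forall eps, 0 < eps -> exists lo n, A - eps < wsum a lo n).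
Proof.
  intros H0 HB.
  destruct (completeness (fun s => exists lo n, s = wsum a lo n)) as [A [Hub Hleast]].
  - exists B. intros s [lo [n ->]]. apply HB.
  - exists 0, 0%Z, 0%nat. reflexivity.
  - exists A. split; [intros lo n; apply Hub; eauto |].
    intros eps Heps. apply NNPP. intros Hnone.
    assert (A <= A - eps); [| lra].
    apply Hleast. intros s [lo [n ->]]. apply Rnot_lt_le. intros Hlt. apply Hnone. eauto.
Qed.

Lemma le_of_forall_eps x B c : 0 <= c -> (forall eps, 0 < eps -> x <= B + c * eps) -> x <= B.
Proof.
  intros Hc H. apply Rnot_lt_le. intros Hx.
  assert (He : 0 < (x - B) / (c + 1)) by (apply Rdiv_lt_0_compat; lra).
  specialize (H _ He).
  assert (c * ((x - B) / (c + 1)) < x - B); [| lra].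
  apply Rlt_le_trans with ((c + 1) * ((x - B) / (c + 1))); [apply Rmult_lt_compat_r; lra |].
  right. field. lra.
Qed.

(* Discrete convolution sum_{k >= 0} p_k u_{i+k}: the one-sided averaging
   operator of the scheme (conv_from is the instance p = cell masses). *)
Definition conv (p : nat -> R) (u : Z -> R) (i : Z) : R :=
  Series (fun k => p k * u (i + Z.of_nat k)%Z).

Definition decrement (p : nat -> R) (k : nat) : R := p k - p (S k).

Lemma ex_series_weighted (p g : nat -> R) B :
  (forall k, 0 <= p k) -> ex_series p -> (forall k, Rabs (g k) <= B) ->
  ex_series (fun k => p k * g k).
Proof.
  intros Hp He Hg.
  apply (@ex_series_le R_AbsRing R_CompleteNormedModule _ (fun k => B * p k)).
  - intros k. change (norm (p k * g k)) with (Rabs (p k * g k)).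
    rewrite Rabs_mult, Rabs_pos_eq, Rmult_comm by apply Hp.
    apply Rmult_le_compat_r; [apply Hp | apply Hg].
  - exact (ex_series_scal_l B p He).
Qed.

Lemma Series_nonneg (a : nat -> R) : (forall n, 0 <= a n) -> ex_series a -> 0 <= Series a.
Proof.
  intros H He. replace 0 with (Series (fun k => 0 * a k)).
  - apply Series_le; [intros n; specialize (H n); lra | exact He].
  - rewrite Series_scal_l; ring.
Qed.

Lemma Rabs_weighted_Series (r g : nat -> R) :
  (forall k, 0 <= r k) -> ex_series (fun k => r k * Rabs (g k)) ->
  Rabs (Series (fun k => r k * g k)) <= Series (fun k => r k * Rabs (g k)).
Proof.
  intros Hr Hex.
  assert (E : forall k, Rabs (r k * g k) = r k * Rabs (g k))
    by (intros k; rewrite Rabs_mult, Rabs_pos_eq by apply Hr; reflexivity).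
  eapply Rle_trans; [apply Series_Rabs; exact (ex_series_ext _ _ (fun k => eq_sym (E k)) Hex) |].
  right. apply Series_ext, E.
Qed.

Lemma window_weighted_Series (r : nat -> R) (b : Z -> R) Bb A d lo n :
  (forall k, 0 <= r k) -> ex_series r -> (forall j, 0 <= b j <= Bb) ->
  (forall lo n, wsum b lo n <= A) ->
  wsum (fun i => Series (fun k => r k * b (i + d + Z.of_nat k)%Z)) lo n <= Series r * A.
Proof.
  intros Hr Hex Hb HA.
  assert (Hex_i : forall i, ex_series (fun k => r k * b (i + d + Z.of_nat k)%Z)).
  { intros i. apply ex_series_weighted with Bb; [exact Hr | exact Hex |].
    intros k. destruct (Hb (i + d + Z.of_nat k)%Z). rewrite Rabs_pos_eq; lra. }
  destruct (wsum_Series _ lo n Hex_i) as [_ ->].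
  rewrite <- Series_scal_r. apply Series_le; [| apply ex_series_scal_r, Hex].
  intros k. rewrite wsum_scal.
  rewrite (wsum_ext _ (fun i => b (i + (d + Z.of_nat k))%Z)) by (intros; f_equal; lia).
  rewrite wsum_shift. split.
  - apply Rmult_le_pos; [apply Hr | apply wsum_nonneg; intros; apply Hb].
  - apply Rmult_le_compat_l; [apply Hr | apply HA].
Qed.

Section Kernel.

Variable p : nat -> R.
Hypothesis K : discrete_kernel p.

Let p_nonneg := kernel_nonneg p K.

Lemma kernel_ex : ex_series p.
Proof. exists 1. apply (kernel_mass p K). Qed.

Lemma kernel_sum : Series p = 1.
Proof. apply is_series_unique, (kernel_mass p K). Qed.

Lemma kernel_ex_tail : ex_series (fun k => p (S k)).
Proof. apply (proj1 (ex_series_incr_1 p)), kernel_ex. Qed.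

Lemma kernel_head : 0 <= p 0%nat <= 1.
Proof.
  split; [apply p_nonneg |].
  rewrite <- kernel_sum, (Series_incr_1 p kernel_ex).
  assert (0 <= Series (fun k => p (S k))) by (apply Series_nonneg; [intros; apply p_nonneg | apply kernel_ex_tail]).
  lra.
Qed.

Lemma decrement_nonneg k : 0 <= decrement p k.
Proof. unfold decrement. generalize (kernel_noninc p K k). lra. Qed.

Lemma decrement_ex : ex_series (decrement p).
Proof. apply (ex_series_minus p (fun k => p (S k))); [apply kernel_ex | apply kernel_ex_tail]. Qed.

Lemma decrement_sum : Series (decrement p) = p 0%nat.
Proof.
  unfold decrement.
  rewrite (Series_minus p (fun k => p (S k)) kernel_ex kernel_ex_tail), (Series_incr_1 p kernel_ex).
  ring.
Qed.

Lemma conv_ex (u : Z -> R) B i : (forall j, Rabs (u j) <= B) ->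
  ex_series (fun k => p k * u (i + Z.of_nat k)%Z).
Proof. intros Hu. apply ex_series_weighted with B; [exact p_nonneg | exact kernel_ex | intros; apply Hu]. Qed.

Lemma decrement_conv_ex (u : Z -> R) B i : (forall j, Rabs (u j) <= B) ->
  ex_series (fun k => decrement p k * u (i + Z.of_nat k)%Z).
Proof.
  intros Hu. apply ex_series_weighted with B;
    [exact decrement_nonneg | exact decrement_ex | intros; apply Hu].
Qed.

(* The convolution commutes with affine maps, since the weights have mass one. *)
Lemma conv_affine (g : Z -> R) B c1 c2 i : (forall j, Rabs (g j) <= B) ->
  conv p (fun j => c1 * g j + c2) i = c1 * conv p g i + c2.
Proof.
  intros Hg. unfold conv.
  transitivity (Series (fun k => c1 * (p k * g (i + Z.of_nat k)%Z)) + Series (fun k => p k * c2)).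
  - rewrite <- Series_plus; [apply Series_ext; intros; ring | |].
    + apply (ex_series_scal_l c1 _ (conv_ex g B i Hg)).
    + apply ex_series_scal_r, kernel_ex.
  - rewrite Series_scal_l, Series_scal_r, kernel_sum; ring.
Qed.

Lemma conv_bounds (u : Z -> R) m M i : 0 <= m -> (forall j, m <= u j <= M) ->
  m <= conv p u i <= M.
Proof.
  intros Hm Hu.
  assert (HB : forall j, Rabs (u j) <= M) by (intros j; destruct (Hu j); rewrite Rabs_pos_eq; lra).
  assert (Hc : forall x, Series (fun k => p k * x) = x)
    by (intros x; rewrite Series_scal_r, kernel_sum; ring).
  unfold conv. rewrite <- (Hc m) at 1. rewrite <- (Hc M). split; apply Series_le.
  - intros k. destruct (Hu (i + Z.of_nat k)%Z). generalize (p_nonneg k); intros. split; nra.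
  - apply (conv_ex u M i HB).
  - intros k. destruct (Hu (i + Z.of_nat k)%Z). generalize (p_nonneg k); intros. split; nra.
  - apply ex_series_scal_r, kernel_ex.
Qed.

Lemma conv_forward_diff (g : Z -> R) B i : (forall j, Rabs (g j) <= B) ->
  conv p g (i + 1)%Z - conv p g i = conv p (fun j => g (j + 1)%Z - g j) i.
Proof.
  intros Hg. unfold conv.
  rewrite <- Series_minus by (apply conv_ex with B; exact Hg).
  apply Series_ext. intros k. replace (i + 1 + Z.of_nat k)%Z with (i + Z.of_nat k + 1)%Z by lia.
  ring.
Qed.

(* Summation by parts: the difference of the convolution splits into the
   diagonal term -p_0 g_i and a nonnegative combination of the values g_{i+1+k}. *)
Lemma conv_diff_decomp (g : Z -> R) B i : (forall j, Rabs (g j) <= B) ->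
  conv p g (i + 1)%Z - conv p g i =
  - p 0%nat * g i + Series (fun k => decrement p k * g (i + 1 + Z.of_nat k)%Z).
Proof.
  intros Hg. unfold conv.
  rewrite (Series_incr_1 (fun k => p k * g (i + Z.of_nat k)%Z)) by (apply conv_ex with B; exact Hg).
  replace (i + Z.of_nat 0)%Z with i by lia.
  assert (Etail : Series (fun k => p (S k) * g (i + Z.of_nat (S k))%Z)
                = Series (fun k => p (S k) * g (i + 1 + Z.of_nat k)%Z)).
  { apply Series_ext. intros k. f_equal. f_equal. lia. }
  assert (Etail_ex : ex_series (fun k => p (S k) * g (i + 1 + Z.of_nat k)%Z)).
  { apply ex_series_weighted with B; [intros; apply p_nonneg | apply kernel_ex_tail | intros; apply Hg]. }
  assert (Edecr : Series (fun k => decrement p k * g (i + 1 + Z.of_nat k)%Z)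
     = Series (fun k => p k * g (i + 1 + Z.of_nat k)%Z) - Series (fun k => p (S k) * g (i + 1 + Z.of_nat k)%Z)).
  { rewrite <- Series_minus by (try apply conv_ex with B; assumption).
    apply Series_ext. intros; unfold decrement; ring. }
  rewrite Etail, Edecr. ring.
Qed.

Lemma conv_window_abs (b : Z -> R) Bb Bw lo n : (forall j, Rabs (b j) <= Bb) ->
  (forall lo n, wsum (fun i => Rabs (b i)) lo n <= Bw) ->
  wsum (fun i => Rabs (conv p b i)) lo n <= Bw.
Proof.
  intros Hb Hw.
  apply Rle_trans with (wsum (fun i => Series (fun k => p k * Rabs (b (i + Z.of_nat k)%Z))) lo n).
  - apply wsum_le. intros i. unfold conv.
    apply Rabs_weighted_Series; [exact p_nonneg |].
    apply (conv_ex (fun j => Rabs (b j)) Bb). intros j; rewrite Rabs_Rabsolu; apply Hb.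
  - rewrite (wsum_ext _ (fun i => Series (fun k => p k * Rabs (b (i + 0 + Z.of_nat k)%Z))))
      by (intros i; rewrite Z.add_0_r; reflexivity).
    rewrite <- (Rmult_1_l Bw), <- kernel_sum.
    apply (window_weighted_Series p (fun j => Rabs (b j)) Bb); [exact p_nonneg | exact kernel_ex | | exact Hw].
    intros j; split; [apply Rabs_pos | apply Hb].
Qed.

Lemma conv_diff_affine (g h : Z -> R) B c1 c2 i : (forall j, Rabs (g j) <= B) ->
  (forall j, h j = c1 * g j + c2) ->
  conv p h (i + 1)%Z - conv p h i = c1 * (conv p g (i + 1)%Z - conv p g i).
Proof.
  intros Hg Hh.
  assert (E : forall i, conv p h i = conv p (fun j => c1 * g j + c2) i)
    by (intros; apply Series_ext; intros; rewrite Hh; reflexivity).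
  rewrite !E, !(conv_affine g B) by exact Hg. ring.
Qed.

(* Positivity of the scheme for a nonnegative datum g: only the diagonal weight
   p_0 enters with a negative sign, so the update e + lam (Δ conv g) stays
   nonnegative as long as e dominates lam p_0 g_i. *)
Lemma conv_diff_lower (g : Z -> R) B lam e i : 0 <= lam -> (forall j, 0 <= g j <= B) ->
  lam * p 0%nat * g i <= e -> 0 <= e + lam * (conv p g (i + 1)%Z - conv p g i).
Proof.
  intros Hlam Hg He.
  assert (HgB : forall j, Rabs (g j) <= B) by (intros j; destruct (Hg j); rewrite Rabs_pos_eq; lra).
  rewrite (conv_diff_decomp g B i HgB).
  assert (0 <= Series (fun k => decrement p k * g (i + 1 + Z.of_nat k)%Z)).
  { apply Series_nonneg; [| apply (decrement_conv_ex g B (i + 1) HgB)].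
    intros k. apply Rmult_le_pos; [apply decrement_nonneg | apply Hg]. }
  nra.
Qed.

End Kernel.

Definition flux_admissible (W : R -> R) (S : R) : Prop :=
  forall x y, 1 <= x <= y -> 0 <= W y - W x <= S * (y - x).

Section Flux.

Variables (W : R -> R) (S : R).
Hypothesis HW : flux_admissible W S.

Lemma flux_lipschitz x y : 1 <= x -> 1 <= y -> Rabs (W y - W x) <= S * Rabs (y - x).
Proof.
  intros Hx Hy. destruct (Rle_dec x y) as [Hxy | Hxy].
  - destruct (HW x y (conj Hx Hxy)). rewrite !Rabs_pos_eq by lra. lra.
  - destruct (HW y x (conj Hy (Rlt_le _ _ (Rnot_le_lt _ _ Hxy)))).
    rewrite Rabs_left1, (Rabs_left1 (y - x)) by lra. lra.
Qed.

(* Under the CFL condition c S <= 1, the increments of x - c W(x) have the sign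
   of those of x, so |Δx - c ΔW| = |Δx| - c |ΔW|: this is the monotonicity of
   the diagonal part of the scheme. *)
Lemma flux_cfl_contraction x y c : 1 <= x -> 1 <= y -> 0 <= c -> c * S <= 1 ->
  Rabs ((y - x) - c * (W y - W x)) <= Rabs (y - x) - c * Rabs (W y - W x).
Proof.
  intros Hx Hy Hc HcS. destruct (Rle_dec x y) as [Hxy | Hxy].
  - destruct (HW x y (conj Hx Hxy)).
    assert (c * (W y - W x) <= y - x) by nra.
    assert (0 <= c * (W y - W x)) by nra.
    rewrite !Rabs_pos_eq by lra. lra.
  - destruct (HW y x (conj Hy (Rlt_le _ _ (Rnot_le_lt _ _ Hxy)))).
    assert (c * (W x - W y) <= x - y) by nra.
    assert (0 <= c * (W x - W y)) by nra.
    rewrite (Rabs_left1 (y - x)), (Rabs_left1 (W y - W x)), Rabs_left1 by nra. lra.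
Qed.

Lemma flux_bounded m M x : 1 <= m -> 0 <= S -> m <= x <= M -> Rabs (W x) <= Rabs (W m) + S * (M - m).
Proof.
  intros Hm HS Hx. destruct (HW m x) as [H1 H2]; [lra |].
  replace (W x) with (W m + (W x - W m)) by ring.
  eapply Rle_trans; [apply Rabs_triang |]. rewrite (Rabs_pos_eq (W x - W m)) by lra. nra.
Qed.

End Flux.

Lemma Wf_ex_derive (V : R -> R) t : (forall x, 0 <= x -> ex_derive V x) -> 0 < t -> ex_derive (Wf V) t.
Proof.
  intros HV_diff Ht. unfold Wf.
  apply (ex_derive_comp V (fun y => / y) t).
  - apply HV_diff. apply Rlt_le, Rinv_0_lt_compat, Ht.
  - apply (ex_derive_inv (fun y => y) t); [apply ex_derive_id | lra].
Qed.

(* W(w) = V(1/w) is non-decreasing because V is non-increasing, and by the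
   mean value theorem it is S-Lipschitz for any upper bound S of W' on [1, +oo). *)
Lemma Wf_admissible (V : R -> R) S :
  (forall x, 0 <= x -> ex_derive V x) ->
  (forall x1 x2, 0 <= x1 -> x1 <= x2 -> V x2 <= V x1) ->
  (forall w, 1 <= w -> Derive (Wf V) w <= S) -> flux_admissible (Wf V) S.
Proof.
  intros HV_diff HV_noninc HS x y [Hx Hxy]. split.
  - unfold Wf. assert (0 < / y) by (apply Rinv_0_lt_compat; lra).
    assert (/ y <= / x) by (apply Rinv_le_contravar; lra).
    generalize (HV_noninc (/ y) (/ x) (Rlt_le _ _ H) H0). lra.
  - destruct (MVT_gen (Wf V) x y (Derive (Wf V))) as [c [Hc Ec]].
    + intros t Ht. rewrite Rmin_left in Ht by lra.
      apply Derive_correct, Wf_ex_derive; [exact HV_diff | lra].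
    + intros t Ht. rewrite Rmin_left in Ht by lra.
      apply continuity_pt_filterlim, (ex_derive_continuous (Wf V)), Wf_ex_derive; [exact HV_diff | lra].
    + rewrite Rmin_left, Rmax_right in Hc by lra.
      rewrite Ec. apply Rmult_le_compat_r; [lra | apply HS; lra].
Qed.

(* One step of the scheme: w^{n+1}_i = w^n_i + lam (Wbar_{i+1/2} - Wbar_{i-1/2}),
   with Wbar_{i-1/2} = conv p (W o w^n) i. *)
Definition step (lam : R) (p : nat -> R) (W : R -> R) (u : Z -> R) (i : Z) : R :=
  u i + lam * (conv p (fun j => W (u j)) (i + 1)%Z - conv p (fun j => W (u j)) i).

(* The invariant propagated by the scheme: values in [m, M] and total
   variation at most B, measured on every finite window. *)
Definition admissible (m M B : R) (u : Z -> R) : Prop :=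
  (forall j, m <= u j <= M) /\
  (forall lo n, wsum (fun i => Rabs (u (i + 1)%Z - u i)) lo n <= B).

Lemma admissible_ext m M B (u v : Z -> R) : (forall j, u j = v j) ->
  admissible m M B u -> admissible m M B v.
Proof.
  intros E [Hr Htv]. split.
  - intros j. rewrite <- E. apply Hr.
  - intros lo n. rewrite (wsum_ext _ (fun i => Rabs (u (i + 1)%Z - u i))) by (intros; rewrite !E; reflexivity).
    apply Htv.
Qed.

Section Step.

Variables (p : nat -> R) (W : R -> R) (S lam m M B : R) (u : Z -> R).
Hypothesis K : discrete_kernel p.
Hypothesis HW : flux_admissible W S.
Hypotheses (Hlam : 0 <= lam) (HS : 0 <= S) (Hm : 1 <= m).
Hypothesis Hu : admissible m M B u.

Let Hu_range := proj1 Hu.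
Let Hu_tv := proj2 Hu.

Let a (j : Z) : R := W (u (j + 1)%Z) - W (u j).

Let BG := Rabs (W m) + S * (M - m).

Lemma flux_along_bounded j : Rabs (W (u j)) <= BG.
Proof. apply (flux_bounded W S HW); [exact Hm | exact HS | apply Hu_range]. Qed.

Lemma flux_incr_bounded j : Rabs (a j) <= BG + BG.
Proof.
  unfold a. eapply Rle_trans; [apply Rabs_triang |].
  rewrite Rabs_Ropp. generalize (flux_along_bounded (j + 1)) (flux_along_bounded j). lra.
Qed.

Lemma flux_incr_lipschitz j : Rabs (a j) <= S * Rabs (u (j + 1)%Z - u j).
Proof.
  apply (flux_lipschitz W S HW); [destruct (Hu_range j) | destruct (Hu_range (j + 1)%Z)]; lra.
Qed.

Lemma flux_incr_windows lo n : wsum (fun i => Rabs (a i)) lo n <= S * B.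
Proof.
  eapply Rle_trans; [apply (wsum_le _ (fun i => S * Rabs (u (i + 1)%Z - u i))), flux_incr_lipschitz |].
  rewrite wsum_scal. apply Rmult_le_compat_l; [exact HS | apply Hu_tv].
Qed.

Lemma step_increment i : step lam p W u i - u i = lam * conv p a i.
Proof.
  unfold step, a. rewrite (conv_forward_diff p K _ BG) by exact flux_along_bounded. ring.
Qed.

Lemma step_time_windows lo n : wsum (fun i => Rabs (step lam p W u i - u i)) lo n <= lam * (S * B).
Proof.
  rewrite (wsum_ext _ (fun i => lam * Rabs (conv p a i))), wsum_scal.
  - apply Rmult_le_compat_l; [exact Hlam |].
    apply (conv_window_abs p K a (BG + BG)); [exact flux_incr_bounded | exact flux_incr_windows].
  - intros i. rewrite step_increment, Rabs_mult, Rabs_pos_eq by exact Hlam. reflexivity.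
Qed.

Hypothesis HCFL : lam * S <= 1.

(* The CFL condition for the diagonal weight: lam p_0 S <= lam S <= 1. *)
Lemma cfl_diagonal : 0 <= lam * p 0%nat /\ lam * p 0%nat * S <= 1.
Proof.
  destruct (kernel_head p K). split; [nra |].
  apply Rle_trans with (p 0%nat * 1); [nra | lra].
Qed.

Lemma step_range i : m <= step lam p W u i <= M.
Proof.
  destruct cfl_diagonal as [Hc0 HcS]. destruct (Hu_range i) as [Hmi HiM].
  split.
  - assert (Hg : forall j, 0 <= W (u j) - W m <= S * (M - m)).
    { intros j. destruct (Hu_range j). destruct (HW m (u j)); [lra |]. split; nra. }
    assert (Hgi : lam * p 0%nat * (W (u i) - W m) <= u i - m).
    { destruct (HW m (u i)); [lra |]. nra. }
    generalize (conv_diff_lower p K _ _ lam _ i Hlam Hg Hgi).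
    rewrite (conv_diff_affine p K (fun j => W (u j)) _ BG 1 (- W m)) by (exact flux_along_bounded || intros; ring).
    unfold step. lra.
  - assert (Hg : forall j, 0 <= W M - W (u j) <= S * (M - m)).
    { intros j. destruct (Hu_range j). destruct (HW (u j) M); [lra |]. split; nra. }
    assert (Hgi : lam * p 0%nat * (W M - W (u i)) <= M - u i).
    { destruct (HW (u i) M); [lra |]. nra. }
    generalize (conv_diff_lower p K _ _ lam _ i Hlam Hg Hgi).
    rewrite (conv_diff_affine p K (fun j => W (u j)) _ BG (-1) (W M)) by (exact flux_along_bounded || intros; ring).
    unfold step. lra.
Qed.

Lemma step_forward_diff i :
  step lam p W u (i + 1)%Z - step lam p W u i =
  (u (i + 1)%Z - u i) - lam * p 0%nat * a i +
  lam * Series (fun k => decrement p k * a (i + 1 + Z.of_nat k)%Z).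
Proof.
  assert (E : forall j, step lam p W u j = u j + lam * conv p a j)
    by (intros j; generalize (step_increment j); lra).
  rewrite !E.
  transitivity ((u (i + 1)%Z - u i) + lam * (conv p a (i + 1)%Z - conv p a i)); [ring |].
  rewrite (conv_diff_decomp p K a (BG + BG) i flux_incr_bounded). ring.
Qed.

(* Under the CFL condition the diagonal part is monotone, which turns the
   summation by parts formula into an estimate of |Δ(step u)_i|. *)
Lemma step_forward_diff_abs i :
  Rabs (step lam p W u (i + 1)%Z - step lam p W u i) <=
  Rabs (u (i + 1)%Z - u i) - lam * p 0%nat * Rabs (a i) +
  lam * Series (fun k => decrement p k * Rabs (a (i + 1 + Z.of_nat k)%Z)).
Proof.
  destruct cfl_diagonal as [Hc0 HcS].
  rewrite step_forward_diff. eapply Rle_trans; [apply Rabs_triang |].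
  apply Rplus_le_compat.
  - apply (flux_cfl_contraction W S HW); [destruct (Hu_range i) | destruct (Hu_range (i + 1)%Z) | |]; lra.
  - rewrite Rabs_mult, (Rabs_pos_eq lam) by exact Hlam. apply Rmult_le_compat_l; [exact Hlam |].
    apply Rabs_weighted_Series; [apply decrement_nonneg, K |].
    apply (decrement_conv_ex p K (fun j => Rabs (a j)) (BG + BG)).
    intros j. rewrite Rabs_Rabsolu. apply flux_incr_bounded.
Qed.

(* On any window, the negative diagonal contribution lam p_0 sum |a_i|
   compensates the off-diagonal one up to the gap between that window sum
   and the supremum A of the window sums of |a|. *)
Lemma step_window_estimate L N A : (forall lo n, wsum (fun i => Rabs (a i)) lo n <= A) ->
  wsum (fun i => Rabs (step lam p W u (i + 1)%Z - step lam p W u i)) L N <=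
  B - lam * p 0%nat * wsum (fun i => Rabs (a i)) L N + lam * (p 0%nat * A).
Proof.
  intros HA.
  eapply Rle_trans; [apply wsum_le, step_forward_diff_abs |].
  rewrite wsum_plus, wsum_minus, !wsum_scal.
  generalize (Hu_tv L N); intros.
  assert (wsum (fun i => Series (fun k => decrement p k * Rabs (a (i + 1 + Z.of_nat k)%Z))) L N
          <= p 0%nat * A).
  { rewrite <- (decrement_sum p K).
    apply (window_weighted_Series _ (fun j => Rabs (a j)) (BG + BG));
      [apply decrement_nonneg, K | apply decrement_ex, K | | exact HA].
    intros j. split; [apply Rabs_pos | apply flux_incr_bounded]. }
  nra.
Qed.

Lemma step_tv_windows lo n :
  wsum (fun i => Rabs (step lam p W u (i + 1)%Z - step lam p W u i)) lo n <= B.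
Proof.
  destruct cfl_diagonal as [Hc0 _].
  destruct (window_sup (fun i => Rabs (a i)) (S * B) (fun i => Rabs_pos _) flux_incr_windows)
    as [A [HA Happrox]].
  apply (le_of_forall_eps _ B (lam * p 0%nat) Hc0). intros eps Heps.
  destruct (Happrox eps Heps) as [lo2 [n2 Hlo2]].
  set (L := Z.min lo lo2).
  set (N := Z.to_nat (Z.max (lo + Z.of_nat n) (lo2 + Z.of_nat n2) - L)).
  assert (H1 : wsum (fun i => Rabs (step lam p W u (i + 1)%Z - step lam p W u i)) lo n <=
               wsum (fun i => Rabs (step lam p W u (i + 1)%Z - step lam p W u i)) L N)
    by (apply wsum_window; [intros; apply Rabs_pos | unfold L; lia | unfold N, L; lia]).
  assert (H2 : wsum (fun i => Rabs (a i)) lo2 n2 <= wsum (fun i => Rabs (a i)) L N)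
    by (apply wsum_window; [intros; apply Rabs_pos | unfold L; lia | unfold N, L; lia]).
  generalize (step_window_estimate L N A HA). nra.
Qed.

Lemma step_admissible : admissible m M B (step lam p W u).
Proof. split; [exact step_range | exact step_tv_windows]. Qed.

End Step.

Lemma Rbar_mult_pos_p_infty x : 0 < x -> Rbar_mult (Finite x) p_infty = p_infty.
Proof.
  intros Hx. rewrite Rbar_mult_comm. apply is_Rbar_mult_unique, is_Rbar_mult_p_infty_pos. exact Hx.
Qed.

Lemma conv_from_cell_mass Phi alpha dz g i :
  is_RInt_gen Phi (at_point 0) (Rbar_locally p_infty) 1 -> 0 < alpha -> 0 < dz ->
  conv_from Phi alpha dz g i = conv (cell_mass Phi (dz / alpha)) g i.
Proof.
  intros HPhi_int Halpha Hdz. unfold conv_from, conv. apply Series_ext. intros k.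
  rewrite Phi_ij_cell_mass by assumption. reflexivity.
Qed.

Lemma conv_admissible p (y0 : Z -> R) m M B : discrete_kernel p -> 0 <= m ->
  (forall j, m <= y0 j <= M) ->
  (forall lo n, wsum (fun i => Rabs (y0 (i + 1)%Z - y0 i)) lo n <= B) ->
  admissible m M B (conv p y0).
Proof.
  intros K Hm Hy HB.
  assert (HyM : forall j, Rabs (y0 j) <= M) by (intros j; destruct (Hy j); rewrite Rabs_pos_eq; lra).
  split; [intros j; apply conv_bounds; assumption |].
  intros lo n. rewrite (wsum_ext _ (fun i => Rabs (conv p (fun j => y0 (j + 1)%Z - y0 j) i)))
    by (intros i; rewrite (conv_forward_diff p K y0 M i HyM); reflexivity).
  apply (conv_window_abs p K _ (M + M)); [| exact HB].
  intros j. eapply Rle_trans; [apply Rabs_triang |]. rewrite Rabs_Ropp.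
  generalize (HyM (j + 1)%Z) (HyM j). lra.
Qed.

Lemma datum_range (y0 : Z -> R) :
  (exists B, forall i, Rabs (y0 i) <= B) -> (forall i, 1 <= y0 i) ->
  exists m M, Glb_Rbar (fun y => exists j, y = y0 j) = Finite m /\
              Lub_Rbar (fun y => exists j, y = y0 j) = Finite M /\
              1 <= m /\ (forall j, m <= y0 j <= M).
Proof.
  intros [Bd HBd] Hge1.
  destruct (Glb_Rbar_correct (fun y => exists j, y = y0 j)) as [Hglb_lb Hglb_great].
  destruct (Lub_Rbar_correct (fun y => exists j, y = y0 j)) as [Hlub_ub Hlub_least].
  assert (Hlow : Rbar_le (Finite 1) (Glb_Rbar (fun y => exists j, y = y0 j)))
    by (apply Hglb_great; intros y [j ->]; apply Hge1).
  assert (Hup : Rbar_le (Lub_Rbar (fun y => exists j, y = y0 j)) (Finite Bd)).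
  { apply Hlub_least. intros y [j ->]. generalize (HBd j). intros H.
    apply Rabs_le_between in H. simpl. lra. }
  assert (H0 : Rbar_le (Glb_Rbar (fun y => exists j, y = y0 j)) (Finite (y0 0%Z))) by (apply Hglb_lb; eauto).
  assert (H1 : Rbar_le (Finite (y0 0%Z)) (Lub_Rbar (fun y => exists j, y = y0 j))) by (apply Hlub_ub; eauto).
  destruct (Glb_Rbar _) as [m| |]; try contradiction.
  destruct (Lub_Rbar _) as [M| |]; try contradiction.
  exists m, M. do 3 (split; [reflexivity || exact Hlow |]).
  intros j. split; [apply (Hglb_lb (y0 j)) | apply (Hlub_ub (y0 j))]; eauto.
Qed.

Lemma cfl_sup_bound (V : R -> R) lam : 0 < lam ->
  Rbar_le (Finite 0) (Rbar_mult lam (supWp V)) -> Rbar_le (Rbar_mult lam (supWp V)) (Finite 1) ->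
  exists S, 0 <= S /\ lam * S <= 1 /\ (forall w, 1 <= w -> Derive (Wf V) w <= S) /\
            Rbar_le (Finite S) (normWp V).
Proof.
  intros Hlam H0 H1. unfold supWp in *.
  destruct (Lub_Rbar_correct (fun y => exists w, 1 <= w /\ y = Derive (Wf V) w)) as [Hub Hleast].
  assert (Hder1 : Rbar_le (Finite (Derive (Wf V) 1))
                    (Lub_Rbar (fun y => exists w, 1 <= w /\ y = Derive (Wf V) w)))
    by (apply Hub; exists 1; split; [lra | reflexivity]).
  assert (Hnorm : Rbar_le (Lub_Rbar (fun y => exists w, 1 <= w /\ y = Derive (Wf V) w)) (normWp V)).
  { apply Hleast. intros y [w [Hw ->]]. apply Rbar_le_trans with (Finite (Rabs (Derive (Wf V) w))).
    - apply Rle_abs.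
    - apply (Lub_Rbar_correct _). exists w. split; [exact Hw | reflexivity]. }
  destruct (Lub_Rbar _) as [S| |]; [| rewrite Rbar_mult_pos_p_infty in H1 by exact Hlam; contradiction
                                     | contradiction].
  simpl in H0, H1. exists S. repeat split; [nra | exact H1 | | exact Hnorm].
  intros w Hw. apply (Hub (Derive (Wf V) w)). exists w. split; [exact Hw | reflexivity].
Qed.

Lemma time_estimate_Rbar (b : Z -> R) dz dt S B N : 0 < dz -> 0 < dt -> 0 <= S -> 0 <= B ->
  Rbar_le (Finite S) N -> (forall i, 0 <= b i) ->
  (forall lo n, wsum b lo n <= dt / dz * (S * B)) ->
  Rbar_le (Rbar_mult dz (zsum b)) (Rbar_mult (Rbar_mult dt N) B).
Proof.
  intros Hdz Hdt HS HB HSN Hb Hw.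
  destruct (zsum_finite_of_windows b _ Hb Hw) as [z [-> [Hz0 Hz]]].
  assert (Hdzz : dz * z <= dt * S * B).
  { replace (dt * S * B) with (dz * (dt / dz * (S * B))) by (field; lra). nra. }
  destruct N as [N| |]; simpl in HSN; try contradiction.
  - simpl. apply Rle_trans with (dt * S * B); [exact Hdzz |].
    apply Rmult_le_compat_r; [exact HB | nra].
  - rewrite Rbar_mult_pos_p_infty by exact Hdt.
    destruct (Rle_lt_or_eq_dec 0 B HB) as [HBpos | <-].
    + rewrite (Rbar_mult_comm p_infty), Rbar_mult_pos_p_infty by exact HBpos. exact I.
    + rewrite Rbar_mult_0_r. simpl. nra.
Qed.

Theorem corollary2p3
  (Phi : R -> R) (alpha : R) (V : R -> R) (dz dt : R)
  (y0 : Z -> R) (w : nat -> Z -> R)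
  (* kernel *)
  (HPhi_nonneg : forall z, 0 <= z -> 0 <= Phi z)
  (HPhi_noninc : forall z1 z2, 0 <= z1 -> z1 <= z2 -> Phi z2 <= Phi z1)
  (HPhi_int : is_RInt_gen Phi (at_point 0) (Rbar_locally p_infty) 1)
  (HPhi_mom : ex_RInt_gen (fun z => z * Phi z) (at_point 0) (Rbar_locally p_infty))
  (Halpha : 0 < alpha)
  (* flux: V in C^1([0,oo)), non-increasing *)
  (HV_diff : forall x, 0 <= x -> ex_derive V x)
  (HV_C1 : forall x, 0 <= x -> continuous (Derive V) x)
  (HV_noninc : forall x1 x2, 0 <= x1 -> x1 <= x2 -> V x2 <= V x1)
  (* discretization *)
  (Hdz : 0 < dz) (Hdt : 0 < dt)
  (* CFL: 0 <= lambda sup_{w>=1} W'(w) <= 1, lambda = dt/dz *)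
  (HCFL : Rbar_le (Finite 0) (Rbar_mult (dt / dz) (supWp V)) /\
          Rbar_le (Rbar_mult (dt / dz) (supWp V)) (Finite 1))
  (* initial datum *)
  (Hy_bnd : exists M, forall i, Rabs (y0 i) <= M)
  (Hy_ge1 : forall i, 1 <= y0 i)
  (Hy_BV : is_finite (BV y0))
  (* the scheme *)
  (Hw0 : forall i, w 0%nat i = conv_from Phi alpha dz y0 i)
  (HwS : forall n i, w (S n) i =
      w n i + (dt / dz) * (conv_from Phi alpha dz (fun j => Wf V (w n j)) (i + 1)%Z
                           - conv_from Phi alpha dz (fun j => Wf V (w n j)) i)) :
  forall (n : nat) (i : Z),
    Rbar_le (Finite 1) (Glb_Rbar (fun y => exists j, y = y0 j)) /\
    Rbar_le (Glb_Rbar (fun y => exists j, y = y0 j)) (Finite (w n i)) /\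
    Rbar_le (Finite (w n i)) (Lub_Rbar (fun y => exists j, y = y0 j)) /\
    Rbar_le (BV (w n)) (BV y0) /\
    Rbar_le (Rbar_mult dz (zsum (fun k => Rabs (w (S n) k - w n k))))
            (Rbar_mult (Rbar_mult dt (normWp V)) (BV y0)).
Proof.
  set (p := cell_mass Phi (dz / alpha)).
  assert (K : discrete_kernel p)
    by (apply cell_mass_kernel; try apply Rdiv_lt_0_compat; assumption).
  assert (Hlam : 0 < dt / dz) by (apply Rdiv_lt_0_compat; assumption).
  destruct HCFL as [HCFL0 HCFL1].
  destruct (cfl_sup_bound V _ Hlam HCFL0 HCFL1) as [Sw [HSw [HlamSw [HWp HSw_norm]]]].
  assert (HW : flux_admissible (Wf V) Sw) by (apply Wf_admissible; assumption).
  destruct (datum_range y0 Hy_bnd Hy_ge1) as [m [M [-> [-> [Hm Hy]]]]].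
  set (B := real (BV y0)).
  assert (Hy_tv : forall lo k, wsum (fun i => Rabs (y0 (i + 1)%Z - y0 i)) lo k <= B)
    by (intros; apply window_le_finite_zsum; [intros; apply Rabs_pos | exact Hy_BV]).
  assert (Hstep : forall n j, w (S n) j = step (dt / dz) p (Wf V) (w n) j)
    by (intros; rewrite HwS, !conv_from_cell_mass by assumption; reflexivity).
  assert (Inv : forall n, admissible m M B (w n)).
  { induction n as [|n IHn].
    - apply (admissible_ext _ _ _ (conv p y0)); [intros; rewrite Hw0; symmetry; apply conv_from_cell_mass; assumption |].
      apply conv_admissible; [exact K | lra | exact Hy | exact Hy_tv].
    - apply (admissible_ext _ _ _ (step (dt / dz) p (Wf V) (w n))); [intros; symmetry; apply Hstep |].
      apply (step_admissible p (Wf V) Sw); [exact K | exact HW | lra | exact HSw | exact Hm | exact IHn | exact HlamSw]. }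
  assert (EB : BV y0 = Finite B) by (symmetry; exact Hy_BV).
  intros n i. destruct (Inv n) as [Hrange Htv]. destruct (Hrange i) as [Hmi HiM].
  rewrite EB. split; [exact Hm |]. split; [exact Hmi |]. split; [exact HiM |]. split.
  - apply zsum_le_of_windows, Htv.
  - apply (time_estimate_Rbar _ dz dt Sw B);
      [exact Hdz | exact Hdt | exact HSw | exact (Hy_tv 0%Z 0%nat) | exact HSw_norm | intros; apply Rabs_pos |].
    intros lo k.
    rewrite (wsum_ext _ (fun j => Rabs (step (dt / dz) p (Wf V) (w n) j - w n j)))
      by (intros; rewrite Hstep; reflexivity).
    apply (step_time_windows p (Wf V) Sw _ m M); [exact K | exact HW | lra | exact HSw | exact Hm | exact (Inv n)].
Qed.
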